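(* Let $h_1,h_2,\dots$ be a sequence of positive integers satisfying the repeat property, and let $w>0$. For each $t$ define $f_t:\mathbb{Z}_{\ge0}\to\mathbb{R}$ by $f_t(m)=w$ if $m<h_t$ and $f_t(m)=0$ otherwise, and for a finite interval of times $I$ let $f_I(m)=\sum_{t\in I}f_t(m)$. Then for every finite interval $I$ and every integer $m\ge 2$, $$f_I(m-1)-f_I(m)\ \ge\ f_I(m)-f_I(m+1)-w.$$
   Context: A sequence $h_1,h_2,\dots$ of positive integers has the repeat property if for all $t_1<t_2$ with $h_{t_1}=h_{t_2}$ we have $\{2,3,\dots,h_{t_1}-1\}\subseteq\{h_{t_1+1},h_{t_1+2},\dots,h_{t_2-1}\}$. (Such sequences are exactly the sequences of positions, in the Belady ranking, of requested pages within one weight class; $f_t$ is the cost of a canonical algorithm holding $m$ pages of that class.) *)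

From mathcomp Require Import all_boot all_order all_algebra.
Set Implicit Arguments. Unset Strict Implicit. Unset Printing Implicit Defensive.
Import Order.TTheory GRing.Theory Num.Theory.

(* The sequence h_1, h_2, ... is a function h : nat -> nat; only the values at
   indices t >= 1 are relevant. *)

(* Repeat property: for all 1 <= t1 < t2 with h t1 = h t2,
   {2, ..., h t1 - 1} is contained in {h (t1+1), ..., h (t2-1)}. *)
Definition repeat_property (h : nat -> nat) : Prop :=
  forall t1 t2 : nat, (1 <= t1)%N -> (t1 < t2)%N -> h t1 = h t2 ->
    forall k : nat, (2 <= k)%N -> (k < h t1)%N ->
      exists t : nat, (t1 < t < t2)%N /\ h t = k.

Local Open Scope ring_scope.

Definition f_t (R : realFieldType) (w : R) (h : nat -> nat) (t m : nat) : R :=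
  if (m < h t)%N then w else 0.

(* f_I(m) for the finite interval of times I = [a, b] = {a, ..., b}
   (empty if b < a). *)
Definition f_I (R : realFieldType) (w : R) (h : nat -> nat) (a b m : nat) : R :=
  \sum_(a <= t < b.+1) f_t w h t m.

From mathcomp Require Import all_boot all_order all_algebra.
From mathcomp Require Import zify.
Import Order.TTheory GRing.Theory Num.Theory.

(* The difference f_I(m-1) - f_I(m) equals w times the number of
   times t in I with h_t = m, since f_t(m-1) - f_t(m) is w exactly when
   h_t = m.  The claim is therefore the counting inequality
     #{t in I | h_t = m+1} <= #{t in I | h_t = m} + 1.
   By the repeat property (and 2 <= m < m+1), between any two occurrences of
   the value m+1 there is an occurrence of m.  We prove, for an arbitrary
   sequence g and values x, y, that if any two occurrences of x in a window are
   separated by an occurrence of y, then x occurs at most once more than y in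
   every prefix of the window; the induction on the prefix length jumps back to
   the previous occurrence of x. *)

Section Occurrences.

Variables (T : eqType) (g : nat -> T).

Definition occurrences (x : T) (lo hi : nat) : nat :=
  \sum_(lo <= t < hi) (g t == x : nat).

Lemma occurrences_split (x : T) {lo mid hi : nat} :
  lo <= mid <= hi ->
  occurrences x lo hi = occurrences x lo mid + occurrences x mid hi.
Proof.
by move=> /andP[lo_mid mid_hi]; rewrite /occurrences (big_cat_nat lo_mid mid_hi).
Qed.

Lemma occurrencesP (x : T) (lo hi : nat) :
  reflect (exists t, lo <= t < hi /\ g t = x) (0 < occurrences x lo hi).
Proof.
rewrite lt0n sum_nat_seq_neq0; apply: (iffP hasP) => [[t] | [t [t_in gt_x]]].
  by rewrite mem_index_iota => t_in; case: (g t =P x) => // gt_x _; exists t.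
by exists t; rewrite ?mem_index_iota //= gt_x eqxx.
Qed.

Lemma last_occurrence (x : T) (lo n : nat) :
  0 < occurrences x lo n ->
  exists2 t1, lo <= t1 < n /\ g t1 = x & occurrences x t1.+1 n = 0.
Proof.
move=> /occurrencesP[t0 [t0_in /eqP gt0_x]].
have ubP t : (lo <= t < n) && (g t == x) -> t <= n by case/andP => /andP[_ /ltnW].
have exP : exists t, (lo <= t < n) && (g t == x) by exists t0; rewrite t0_in gt0_x.
have [t1 /andP[t1_in /eqP gt1_x] t1_max] := ex_maxnP exP ubP.
exists t1 => //; apply/eqP; rewrite -leqn0 leqNgt; apply/occurrencesP.
move=> [t [/andP[t1_t t_n] gt_x]].
suff : t <= t1 by rewrite leqNgt t1_t.
by apply: t1_max; rewrite gt_x eqxx andbT; lia.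
Qed.

(* Interleaving: if any two occurrences of x at or after lo are separated by an
   occurrence of y, then x occurs at most once more than y in [lo, n).  Going
   from n to n+1 with g n = x, we jump back to the previous occurrence t1 of x:
   no x lies strictly between t1 and n, while at least one y does. *)
Lemma occurrences_interleaved (x y : T) (lo : nat) :
  (forall t1 t2, lo <= t1 -> t1 < t2 -> g t1 = x -> g t2 = x ->
     exists t, t1 < t < t2 /\ g t = y) ->
  forall n, occurrences x lo n <= occurrences y lo n + 1.
Proof.
move=> separated; elim/ltn_ind => -[|n] IH.
  by rewrite /occurrences big_geq.
have [n_lt_lo | lo_n] := ltnP n lo.
  by rewrite /occurrences big_geq.
have split_last z : occurrences z lo n.+1 = occurrences z lo n + (g n == z).
  by rewrite /occurrences big_nat_recr.
rewrite !split_last.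
have [gn_x | gn_x] := eqVneq (g n) x; last first.
  by rewrite addn0 (leq_trans (IH n _)) // leq_add2r leq_addr.
have [no_earlier | /last_occurrence earlier] := posnP (occurrences x lo n).
  by rewrite no_earlier add0n; apply: leq_addl.
have [t1 [/andP[lo_t1 t1_n] gt1_x] none_after] := earlier.
have [t [t1_t_n gt_y]] := separated t1 n lo_t1 t1_n gt1_x gn_x.
have y_after : 0 < occurrences y t1.+1 n by apply/occurrencesP; exists t.
have mid : lo <= t1.+1 <= n by rewrite t1_n (leq_trans lo_t1).
rewrite (occurrences_split x mid) (occurrences_split y mid) none_after addn0.
have := IH t1.+1 t1_n; lia.
Qed.

End Occurrences.

Arguments occurrences {T} g x lo hi.

Lemma repeat_property_separates (h : nat -> nat) (m : nat) :
  repeat_property h -> 2 <= m ->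
  forall t1 t2, 1 <= t1 -> t1 < t2 -> h t1 = m.+1 -> h t2 = m.+1 ->
    exists t, t1 < t < t2 /\ h t = m.
Proof.
move=> hrep hm t1 t2 t1_pos t1_t2 ht1 ht2.
by apply: (hrep t1 t2) => //; rewrite ?ht1 ?ht2.
Qed.

Local Open Scope ring_scope.

Lemma f_I_drop (R : realFieldType) (h : nat -> nat) (w : R) (a b m : nat) :
  (1 <= m)%N ->
  f_I w h a b m.-1 - f_I w h a b m = (occurrences h m a b.+1)%:R * w.
Proof.
move=> m_pos; rewrite /f_I /occurrences -sumrB natr_sum mulr_suml.
apply: eq_bigr => t _; rewrite /f_t.
case: (ltnP m.-1 (h t)) => below_pred; case: (ltnP m (h t)) => below;
  case: (eqVneq (h t) m) => ht_m /=; rewrite ?mul0r ?mul1r ?subrr ?subr0 //; lia.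
Qed.

Theorem lemma6 (R : realFieldType) (h : nat -> nat) (w : R)
  (hpos : forall t : nat, (1 <= t)%N -> (0 < h t)%N)
  (hrep : repeat_property h)
  (wpos : 0 < w)
  (a b : nat) (ha : (1 <= a)%N)
  (m : nat) (hm : (2 <= m)%N) :
  f_I w h a b m.-1 - f_I w h a b m >= f_I w h a b m - f_I w h a b m.+1 - w.
Proof.
have count_bound : (occurrences h m.+1 a b.+1 <= occurrences h m a b.+1 + 1)%N.
  apply: occurrences_interleaved => t1 t2 a_t1.
  exact: repeat_property_separates (leq_trans ha a_t1).
rewrite f_I_drop ?(leq_trans _ hm) //.
rewrite (@f_I_drop R h w a b m.+1 (ltn0Sn m)) lerBlDr.
rewrite -[X in _ + X]mul1r -mulrDl natr1 ler_pM2r // ler_nat.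
by rewrite addn1 in count_bound.
Qed.
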